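(* Let $\mathcal{Z}_0$ be the signaling scheme output by the Split-and-Match procedure on $\mathcal{D}$. Then for every signaling scheme $\mathcal{Z}'$ for $\mathcal{D}$ and every $m\in(0,1]$, \[4\int_0^m s_{\mathcal{Z}_0}(x)\,dx\ \ge\ \int_0^m s_{\mathcal{Z}'}(x)\,dx.\]
   Context: Values and prior. $0<v_1<\dots<v_n$ are reals, and $v_0:=0$. $\mathcal{D}$ is a distribution on $\{v_1,\dots,v_n\}$ with $f_{\mathcal{D}}(v_i)>0$ and CDF $F_{\mathcal{D}}$. Signals and pricing. A signal is a distribution $S$ on these values, with $G_S(p)=\Pr_{v\sim S}[v\ge p]$. The seller posts $p^*_S$, the smallest $v$ in the support of $S$ maximizing $v\,G_S(v)$. The surplus of value $v$ is $cs_v(S)=\mathbb{1}[v\ge p^*_S](v-p^*_S)$. Signaling schemes. A signaling scheme is $\mathcal{Z}=\{(S_q,\gamma_q)\}_{q\in[Q]}$ with $\gamma_q\ge0$, $\sum\gamma_q=1$ and $\sum_q\gamma_q f_{S_q}=f_{\mathcal{D}}$. Its expected consumer surplus at $v_i$ is $cs_{v_i}(\mathcal{Z})=\sum_q cs_{v_i}(S_q)\gamma_q f_{S_q}(v_i)/f_{\mathcal{D}}(v_i)$. The surplus-mass function $s_{\mathcal{Z}}$ on $(0,1]$ equals $cs_{v_i}(\mathcal{Z})$ on $(F_{\mathcal{D}}(v_{i-1}),F_{\mathcal{D}}(v_i)]$. Special signals. For $a<b$ in $\{v_1,\dots,v_n\}$, the equal-revenue binary signal $S^E_{a,b}$ puts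 mass $1-a/b$ on $a$ and $a/b$ on $b$. A singleton signal on $v_i$ puts mass $1$ on $v_i$. Split-and-Match procedure. 1. Initialize $g_i=t_i=\tfrac12 f_{\mathcal{D}}(v_i)$ for all $i$. 2. Repeat: - let $s$ be the smallest index with $g_s>0$; - let $\ell$ be the smallest index $>s$ with $t_\ell>0$; - if no such pair $(s,\ell)$ exists, stop; - otherwise add the signal $S^E_{v_s,v_\ell}$ with weight $\gamma=\min\{g_s/(1-v_s/v_\ell),\ t_\ell/(v_s/v_\ell)\}$; - set $g_s\leftarrow g_s-\gamma(1-v_s/v_\ell)$ and $t_\ell\leftarrow t_\ell-\gamma v_s/v_\ell$. 3. Finally, for each $i$, the mass of $\mathcal{D}$ at $v_i$ not yet used by the added binary signals is covered by a singleton signal on $v_i$ with weight equal to that remaining mass. The resulting family is $\mathcal{Z}_0$. *)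

From HB Require Import structures.
From mathcomp Require Import all_boot all_order all_algebra.
From mathcomp Require Import all_classical all_reals all_analysis.
Set Implicit Arguments. Unset Strict Implicit. Unset Printing Implicit Defensive.
Import Order.TTheory GRing.Theory Num.Theory.
Local Open Scope ring_scope.

(* Values are indexed by 'I_n (0-based): v i for i : 'I_n is v_{i+1} of the
   paper.  A distribution on {v_1..v_n} is a finite function 'I_n -> R. *)

Section SplitMatch.
Variables (R : realType) (n : nat) (v : 'I_n -> R).

Definition signal := {ffun 'I_n -> R}.

Definition is_signal (S : signal) : Prop :=
  (forall i, 0 <= S i) /\ \sum_i S i = 1.

Definition GS (S : signal) (p : R) : R := \sum_(j | p <= v j) S j.

Definition first_idx (P : pred 'I_n) : option 'I_n :=
  [pick i | P i && [forall k : 'I_n, (k < i)%N ==> ~~ P k]].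

Definition rev_opt (S : signal) (i : 'I_n) : bool :=
  (0 < S i) && [forall j : 'I_n, (0 < S j) ==> (v j * GS S (v j) <= v i * GS S (v i))].

(* p*_S : the smallest value in the support maximizing v G_S(v)
   (v is increasing, so smallest value = smallest index) *)
Definition price (S : signal) : R :=
  match first_idx (rev_opt S) with Some i => v i | None => 0 end.

Definition cs (S : signal) (x : R) : R :=
  if price S <= x then x - price S else 0.

Definition scheme := seq (signal * R).

Definition is_scheme (f : 'I_n -> R) (Z : scheme) : Prop :=
  (forall q, q \in Z -> is_signal q.1 /\ 0 <= q.2) /\
  \sum_(q <- Z) q.2 = 1 /\
  (forall i, \sum_(q <- Z) q.2 * q.1 i = f i).

Definition cs_scheme (f : 'I_n -> R) (Z : scheme) (i : 'I_n) : R :=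
  \sum_(q <- Z) cs q.1 (v i) * q.2 * q.1 i / f i.

Definition Fprev (f : 'I_n -> R) (i : 'I_n) : R := \sum_(j : 'I_n | (j < i)%N) f j.
Definition Fcur (f : 'I_n -> R) (i : 'I_n) : R := \sum_(j : 'I_n | (j <= i)%N) f j.

(* surplus-mass function: equals cs_{v_i}(Z) on (F(v_{i-1}), F(v_i)],
   and 0 outside (0,1] (irrelevant below) *)
Definition surplus_mass (f : 'I_n -> R) (Z : scheme) (x : R) : R :=
  \sum_i (if (Fprev f i < x) && (x <= Fcur f i) then cs_scheme f Z i else 0).

Definition eq_rev_signal (a b : 'I_n) : signal :=
  [ffun i => if i == a then 1 - v a / v b else if i == b then v a / v b else 0].

Definition singleton_signal (a : 'I_n) : signal := [ffun i => if i == a then 1 else 0].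

(* The Split-and-Match loop (step 2); each iteration sets some g_s or t_l
   to exactly 0, so it stops after at most 2n iterations: fuel 2n+1 suffices. *)
Fixpoint sm_loop (fuel : nat) (g t : {ffun 'I_n -> R}) (acc : scheme) : scheme :=
  match fuel with
  | 0%N => acc
  | fuel'.+1 =>
    match first_idx (fun s => 0 < g s) with
    | None => acc
    | Some s =>
      match first_idx (fun l => (s < l)%N && (0 < t l)) with
      | None => acc
      | Some l =>
        let r := v s / v l in
        let gam := Num.min (g s / (1 - r)) (t l / r) in
        let g' := [ffun i => if i == s then g s - gam * (1 - r) else g i] in
        let t' := [ffun i => if i == l then t l - gam * r else t i] in
        sm_loop fuel' g' t' (rcons acc (eq_rev_signal s l, gam))
      end
    end
  end.

Definition sm_binary (f : 'I_n -> R) : scheme :=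
  sm_loop (2 * n).+1 [ffun i => f i / 2] [ffun i => f i / 2] [::].

Definition split_and_match (f : 'I_n -> R) : scheme :=
  let B := sm_binary f in
  B ++ [seq (singleton_signal i, f i - \sum_(q <- B) q.2 * q.1 i) | i <- enum 'I_n].

End SplitMatch.

From HB Require Import structures.
From mathcomp Require Import all_boot all_order all_algebra.
From mathcomp Require Import all_classical all_reals all_analysis.
From mathcomp Require Import ring lra.
Import Order.TTheory GRing.Theory Num.Theory.
Local Open Scope ring_scope.
Set Implicit Arguments. Unset Strict Implicit. Unset Printing Implicit Defensive.

(* Both integrals are weighted sums of the surplus masses [surplus_at Z i] with
   the same weights [mass_weight m i], which are nonnegative and nonincreasing
   in [i]; by summation by parts it suffices to compare prefix sums over the
   values below each [v k].
   Against any scheme, on the values below [v k], surplus plus the revenue of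
   an arbitrary price [p] is at most the welfare, because each signal posts a
   revenue-maximizing price.
   In Split-and-Match the equal-revenue signal on [(v a, v b)] has price [v a]
   and surplus [(v b - v a) v a / v b], which is [v a] times the mass it takes
   from [v a].  Consider the moment the algorithm has exhausted the high halves
   of all values strictly between the current low index [s] and [v k]: the low
   halves below [s] and the high halves between [s] and [k] are fully matched,
   so the welfare below [v k] minus the revenue of price [v s] is at most four
   times the matched surplus, and matching only adds surplus afterwards. *)

Section PrefixDominance.
Variables (R : realDomainType) (n : nat).

Lemma sum_ord_ltS K (Kn : (K < n)%N) (F : 'I_n -> R) :
  \sum_(i : 'I_n | (i < K.+1)%N) F i = \sum_(i : 'I_n | (i < K)%N) F i + F (Ordinal Kn).
Proof.
rewrite (bigD1 (Ordinal Kn)) //= addrC; congr (_ + _); apply: eq_bigl => i.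
by rewrite ltnS -val_eqE /=; case: ltngtP.
Qed.

(* Summation by parts: peel off the constant [w K] from the first [K + 1] weights. *)
Lemma prefix_weighted_sum_ge0 (w d : 'I_n -> R) K :
  (forall k, 0 <= \sum_(i : 'I_n | (i < k)%N) d i) ->
  (forall i : 'I_n, (i < K)%N -> 0 <= w i) ->
  (forall i j : 'I_n, (i <= j)%N -> (j < K)%N -> w j <= w i) ->
  0 <= \sum_(i : 'I_n | (i < K)%N) w i * d i.
Proof.
move=> d_prefix; elim: K w => [|K IH] w w0 w_noninc; first by rewrite big_pred0.
have [Kn | nK] := ltnP K n; last first.
  rewrite (eq_bigl (fun i : 'I_n => (i < K)%N)) => [|i]; last first.
    by rewrite (leq_trans (ltn_ord i) nK) (leq_trans (ltn_ord i) (leqW nK)).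
  by apply: IH => [i /ltnW/w0 | i j ij /ltnW/(w_noninc _ _ ij)].
set c := w (Ordinal Kn).
have -> : \sum_(i : 'I_n | (i < K.+1)%N) w i * d i
    = \sum_(i : 'I_n | (i < K)%N) (w i - c) * d i + c * \sum_(i : 'I_n | (i < K.+1)%N) d i.
  rewrite !sum_ord_ltS mulrDr mulr_sumr addrA -big_split /=; congr (_ + _).
  by apply: eq_bigr => i _; rewrite mulrBl subrK.
apply: addr_ge0; last by rewrite mulr_ge0 ?w0.
apply: IH => [i iK | i j ij jK]; first by rewrite subr_ge0 w_noninc // ltnW.
by rewrite lerD2r w_noninc // ltnW.
Qed.

Lemma ler_prefix_weighted (w a b : 'I_n -> R) :
  (forall k, \sum_(i : 'I_n | (i < k)%N) a i <= \sum_(i : 'I_n | (i < k)%N) b i) ->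
  (forall i, 0 <= w i) -> (forall i j : 'I_n, (i <= j)%N -> w j <= w i) ->
  \sum_i w i * a i <= \sum_i w i * b i.
Proof.
move=> ab w0 w_noninc; rewrite -subr_ge0 -sumrB.
under eq_bigr do rewrite -mulrBr.
rewrite (eq_bigl (fun i : 'I_n => (i < n)%N)) => [|i]; last by rewrite ltn_ord.
apply: prefix_weighted_sum_ge0 => [k | i _ | i j ij _]; rewrite ?w0 ?w_noninc //.
by rewrite sumrB subr_ge0.
Qed.

End PrefixDominance.

Section StepIntegral.
Local Open Scope classical_set_scope.
Variable R : realType.

Definition itv_overlap (a b m : R) := if a < Num.min b m then Num.min b m - a else 0.

Lemma lebesgue_measure_itv_overlap (a b m : R) : 0 <= a ->
  lebesgue_measure (`]a, b] `&` `]0%R, m] : set R) = (itv_overlap a b m)%:E.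
Proof.
move=> a0; have -> : `]a, b] `&` `]0%R, m] = `]a, Num.min b m] :> set R.
  apply/seteqP; split => x /=; rewrite !in_itv /= le_min.
    by move=> [/andP[-> ->] /andP[_ ->]].
  by move=> /andP[ax /andP[-> ->]]; rewrite ax (le_lt_trans a0 ax).
by rewrite lebesgue_measure_itv /= lte_fin /itv_overlap; case: ifP; rewrite ?EFinB.
Qed.

Lemma integral_step_function n (c a b : 'I_n -> R) (m : R) :
  (forall i, 0 <= c i) -> (forall i, 0 <= a i) ->
  (\int[lebesgue_measure]_(x in `]0%R, m])
     (\sum_i (if (a i < x) && (x <= b i) then c i else 0))%:E
   = (\sum_i c i * itv_overlap (a i) (b i) m)%:E)%E.
Proof.
move=> c0 a0; have mD : measurable (`]0%R, m] : set R) by exact: measurable_itv.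
have if_indic i x : (if (a i < x) && (x <= b i) then c i else 0) = c i * \1_(`]a i, b i]) x.
  by rewrite indicE mem_setE in_itv /=; case: ifP; rewrite ?mulr1 ?mulr0.
under eq_integral => x _ do (rewrite -sumEFin; under eq_bigr => i _ do rewrite if_indic).
rewrite ge0_integral_sum // => [|i|i x _]; last by rewrite lee_fin mulr_ge0.
- rewrite -sumEFin; apply: eq_bigr => i _.
  rewrite (@integralZl_indic _ _ _ lebesgue_measure _ mD (fun=> `]a i, b i]) (c i)) //; last first.
    by move=> ci_lt0; move: (c0 i); rewrite leNgt ci_lt0.
  by rewrite integral_indic // EFinM; congr (_ * _)%E; exact: lebesgue_measure_itv_overlap.
- apply/measurable_realfun.measurable_EFinP/measurable_realfun.measurable_funM.
    exact: measurable_cst.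
  by apply: measurable_realfun.measurable_indic; exact: measurable_itv.
Qed.

End StepIntegral.

Section FirstIdx.
Variable n : nat.
Implicit Types (P : pred 'I_n) (i : 'I_n).

Lemma first_idxP P i :
  first_idx P = Some i -> P i /\ forall k : 'I_n, (k < i)%N -> ~~ P k.
Proof.
rewrite /first_idx; case: pickP => // x /andP[Px /forallP minx] [<-].
by split=> // k; apply/implyP.
Qed.

Lemma first_idxPn P : first_idx P = None -> forall i, ~~ P i.
Proof.
rewrite /first_idx; case: pickP => // noP _ i; apply/negP => Pi.
have [j Pj jmin] := arg_minnP (fun j : 'I_n => nat_of_ord j) Pi.
have /negP[] := noP j; rewrite Pj /=; apply/forallP => k; apply/implyP => kj.
by apply/negP => /jmin; rewrite leqNgt kj.
Qed.

Lemma first_idxE P i :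
  P i -> (forall k : 'I_n, (k < i)%N -> ~~ P k) -> first_idx P = Some i.
Proof.
move=> Pi imin; case E: (first_idx P) => [j|]; last by have /negP := first_idxPn E i.
have [Pj jmin] := first_idxP E; congr Some; apply: val_inj.
by case: (ltngtP j i) => // [/imin | /jmin]; rewrite ?Pj ?Pi.
Qed.

End FirstIdx.

Section SplitAndMatch.
Variables (R : realType) (n : nat) (v f : 'I_n -> R).
Hypothesis v_pos : forall i, 0 < v i.
Hypothesis v_incr : forall i j : 'I_n, (i < j)%N -> v i < v j.
Implicit Types (S : signal R n) (i j : 'I_n).

Lemma ler_vE i j : (v i <= v j) = (i <= j)%N.
Proof.
case: (ltngtP i j) => [/v_incr/ltW -> // | /v_incr/lt_geF -> // | ij].
by rewrite (val_inj ij) lexx.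
Qed.

Lemma GS_ge0 S p : (forall i, 0 <= S i) -> 0 <= GS v S p.
Proof. by move=> S0; apply: sumr_ge0. Qed.

Lemma signal_support S : is_signal S -> exists i, 0 < S i.
Proof.
case=> S0 S1; case: (pickP (fun i => 0 < S i)) => [i Si | noS]; first by exists i.
suff S_eq0 : \sum_i S i = 0 by move: S1; rewrite S_eq0 => /eqP; rewrite eq_sym oner_eq0.
by apply: big1 => i _; apply/eqP; rewrite eq_le S0 andbT leNgt noS.
Qed.

Lemma price_first_support S i :
  rev_opt v S i -> (forall k : 'I_n, (k < i)%N -> S k = 0) -> price v S = v i.
Proof.
move=> opt_i below; rewrite /price (first_idxE opt_i) // => k /below Sk.
by rewrite /rev_opt Sk ltxx.
Qed.

Lemma price_opt S : is_signal S -> exists j, price v S = v j /\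
  forall k, 0 < S k -> v k * GS v S (v k) <= v j * GS v S (v j).
Proof.
move=> HS; have [i0 Si0] := signal_support HS.
have [im Sim immax] := @arg_maxP _ R _ i0 (fun i => 0 < S i)
  (fun i => v i * GS v S (v i)) Si0.
case E: (first_idx (rev_opt v S)) => [j|]; last first.
  have /negP[] := first_idxPn E im; rewrite /rev_opt Sim /=.
  by apply/forallP => j; apply/implyP => /immax.
have [/andP[_ /forallP jmax] _] := first_idxP E.
by exists j; split=> [|k]; [rewrite /price E | apply/implyP].
Qed.

Lemma revenue_le_support_revenue S q : (forall i, 0 <= S i) -> 0 < q ->
  GS v S q = 0 \/ exists2 i, 0 < S i & q * GS v S q <= v i * GS v S (v i).
Proof.
move=> S0 q_gt0.
case: (pickP (fun i => (q <= v i) && (0 < S i))) => [i1 Pi1 | none]; last first.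
  left; apply: big1 => k qk; apply/eqP; rewrite eq_le S0 andbT leNgt.
  by move: (none k); rewrite /= qk => /negbT.
have [i /andP[qi Si] imin] :=
  @arg_minnP _ i1 (fun i => (q <= v i) && (0 < S i)) (@nat_of_ord n) Pi1.
right; exists i => //; have -> : GS v S q = GS v S (v i).
  rewrite /GS big_mkcond [RHS]big_mkcond; apply: eq_bigr => k _.
  case: (boolP (v i <= v k)) => ik; first by rewrite (le_trans qi ik).
  case: ifP => // qk; apply/eqP; rewrite eq_le S0 andbT leNgt; apply/negP => Sk.
  by move: ik; rewrite ler_vE (imin k) ?qk.
by rewrite ler_wpM2r ?GS_ge0.
Qed.

Lemma price_revenue_max S : is_signal S ->
  exists j, price v S = v j /\ forall q, q * GS v S q <= v j * GS v S (v j).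
Proof.
move=> HS; have S0 := HS.1; have [j [pj opt]] := price_opt HS.
exists j; split=> // q.
have rev_j_ge0 : 0 <= v j * GS v S (v j) by rewrite mulr_ge0 ?GS_ge0 ?ltW.
have [q_le0 | q_gt0] := lerP q 0.
  by apply: le_trans rev_j_ge0; rewrite mulr_le0_ge0 ?GS_ge0.
case: (revenue_le_support_revenue S0 q_gt0) => [-> | [i Si /le_trans]].
  by rewrite mulr0.
by apply; exact: opt.
Qed.

Lemma price_ge0 S : 0 <= price v S.
Proof. by rewrite /price; case: first_idx => // i; exact: ltW. Qed.

Definition prefix_welfare (w : 'I_n -> R) (k : nat) :=
  \sum_(i : 'I_n | (i < k)%N) w i * v i.

Definition prefix_revenue (w : 'I_n -> R) (k : nat) (p : R) :=
  p * \sum_(i : 'I_n | (i < k)%N && (p <= v i)) w i.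

Lemma prefix_welfare_split w k (s : 'I_n) :
  prefix_welfare w k = \sum_(i : 'I_n | (i < k)%N && (i < s)%N) w i * v i
    + \sum_(i : 'I_n | (i < k)%N && (s < i)%N) w i * (v i - v s) + prefix_revenue w k (v s).
Proof.
rewrite /prefix_welfare /prefix_revenue mulr_sumr !big_mkcondr -!big_split /=.
apply: eq_bigr => i _; rewrite ler_vE.
by case: ltngtP => [_|_|/val_inj ->]; rewrite ?mulr0 ?addr0 ?add0r 1?mulrC //; ring.
Qed.

Definition prefix_surplus S (k : nat) := \sum_(i : 'I_n | (i < k)%N) cs v S (v i) * S i.

Lemma prefix_surplus_revenue_le S k p : (forall i, 0 <= S i) -> p <= price v S ->
  prefix_surplus S k + prefix_revenue S k p <= prefix_welfare S k.
Proof.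
move=> S0 p_le; rewrite /prefix_revenue mulr_sumr big_mkcondr -big_split /=.
apply: ler_sum => i _; have Si := S0 i; have vi := v_pos i; have c0 := price_ge0 S.
by rewrite /cs; case: (lerP (price v S) (v i)) => ci; case: (lerP p (v i)) => pi; nra.
Qed.

Lemma prefix_revenue_le_opt S k p c : (forall i, 0 <= S i) -> 0 <= c <= p ->
  p * GS v S p <= c * GS v S c -> prefix_revenue S k p <= prefix_revenue S k c.
Proof.
move=> S0 /andP[c0 cp] opt; rewrite /prefix_revenue.
case: (pickP (fun i : 'I_n => (i < k)%N && (p <= v i))) => [i0 /andP[i0k pi0] | none];
  last by rewrite big_pred0 // mulr0 mulr_ge0 ?sumr_ge0.
pose H := \sum_(i : 'I_n | ~~ (i < k)%N) S i.
have GS_split q : q <= p -> GS v S q = \sum_(i : 'I_n | (i < k)%N && (q <= v i)) S i + H.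
  move=> qp; rewrite /GS (bigID (fun i : 'I_n => (i < k)%N)) /=.
  congr (_ + _); first by apply: eq_bigl => i; rewrite andbC.
  apply: eq_bigl => i; case: ltnP; rewrite ?andbF //= => ki.
  by rewrite (le_trans qp) // (le_trans pi0) // ler_vE ltnW // (leq_trans i0k ki).
have cH : c * H <= p * H by rewrite ler_wpM2r ?sumr_ge0.
by move: opt; rewrite !GS_split // !mulrDr; lra.
Qed.

Lemma signal_prefix_bound S k p : is_signal S ->
  prefix_surplus S k + prefix_revenue S k p <= prefix_welfare S k.
Proof.
move=> HS; have S0 := HS.1; have [j [pj opt]] := price_revenue_max HS.
have [p_le | p_gt] := lerP p (price v S); first exact: prefix_surplus_revenue_le.
apply: le_trans (prefix_surplus_revenue_le k S0 (lexx _)); rewrite lerD2l pj.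
by apply: prefix_revenue_le_opt; rewrite // -pj price_ge0 ltW.
Qed.

Definition surplus_at (Z : scheme R n) (i : 'I_n) :=
  \sum_(q <- Z) cs v q.1 (v i) * q.2 * q.1 i.

Lemma scheme_sum Z (P : pred 'I_n) (c : 'I_n -> R) : is_scheme f Z ->
  \sum_(i | P i) c i * f i = \sum_(q <- Z) q.2 * \sum_(i | P i) c i * q.1 i.
Proof.
case=> _ [_ mix]; under eq_bigr => i _ do rewrite -mix mulr_sumr.
by rewrite exchange_big; apply: eq_bigr => q _; rewrite mulr_sumr; under eq_bigr do rewrite mulrCA.
Qed.

Lemma scheme_prefix_bound Z k p : is_scheme f Z ->
  \sum_(i : 'I_n | (i < k)%N) surplus_at Z i + prefix_revenue f k p <= prefix_welfare f k.
Proof.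
move=> HZ.
have -> : \sum_(i : 'I_n | (i < k)%N) surplus_at Z i = \sum_(q <- Z) q.2 * prefix_surplus q.1 k.
  rewrite exchange_big; apply: eq_bigr => q _; rewrite mulr_sumr.
  by apply: eq_bigr => i _; rewrite mulrAC mulrC.
have -> : prefix_revenue f k p = \sum_(q <- Z) q.2 * prefix_revenue q.1 k p.
  rewrite /prefix_revenue mulr_sumr (scheme_sum _ (fun=> p) HZ).
  by apply: eq_bigr => q _; rewrite [in RHS]mulr_sumr.
have -> : prefix_welfare f k = \sum_(q <- Z) q.2 * prefix_welfare q.1 k.
  rewrite /prefix_welfare; under eq_bigr do rewrite mulrC.
  rewrite (scheme_sum _ v HZ); apply: eq_bigr => q _.
  by congr (_ * _); apply: eq_bigr => i _; rewrite mulrC.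
rewrite -big_split /= big_seq [leRHS]big_seq; apply: ler_sum => q /HZ.1[HS q0].
by rewrite -mulrDr ler_wpM2l // signal_prefix_bound.
Qed.

Lemma sum_if_eq (P : pred 'I_n) (s : 'I_n) (F : 'I_n -> R) :
  \sum_(i | P i) (if i == s then F i else 0) = if P s then F s else 0.
Proof.
rewrite -big_mkcondr; case: ifP => Ps.
  rewrite (big_pred1 s) // => i /=; case: eqP => [->|]; rewrite ?Ps ?andbF ?andbT //.
by rewrite big_pred0 // => i; case: eqP => [->|]; rewrite ?Ps ?andbF.
Qed.

Section EqualRevenue.
Variables s l : 'I_n.
Hypothesis sl : (s < l)%N.
Let r := v s / v l.

Lemma ratio_gt0 : 0 < r.
Proof. exact: divr_gt0. Qed.

Lemma ratio_lt1 : r < 1.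
Proof. by rewrite ltr_pdivrMr ?mul1r // v_incr. Qed.

Lemma eq_rev_signalE i :
  eq_rev_signal v s l i = (if i == s then 1 - r else 0) + (if i == l then r else 0).
Proof.
rewrite ffunE; case: eqP => [->|_]; last by rewrite add0r.
by rewrite ifF ?addr0 //; apply/negbTE; rewrite neq_ltn sl.
Qed.

Lemma sum_eq_rev_signal (P : pred 'I_n) :
  \sum_(i | P i) eq_rev_signal v s l i = (if P s then 1 - r else 0) + (if P l then r else 0).
Proof. by under eq_bigr do rewrite eq_rev_signalE; rewrite big_split /= !sum_if_eq. Qed.

Lemma price_eq_rev_signal : price v (eq_rev_signal v s l) = v s.
Proof.
have r0 := ratio_gt0; have r1 := ratio_lt1.
have GS_s : GS v (eq_rev_signal v s l) (v s) = 1.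
  by rewrite /GS sum_eq_rev_signal lexx ler_vE ltnW //; ring.
apply: price_first_support => [|k ks]; last first.
  by rewrite eq_rev_signalE !ifF ?addr0 //; apply/negbTE; rewrite neq_ltn ?ks ?(ltn_trans ks).
rewrite /rev_opt eq_rev_signalE eqxx ifF ?addr0; last by apply/negbTE; rewrite neq_ltn sl.
rewrite subr_gt0 r1 /=; apply/forallP => j; apply/implyP; rewrite eq_rev_signalE.
case: eqP => [-> | _]; first by rewrite lexx.
case: eqP => [-> _ | _]; last by rewrite addr0 ltxx.
rewrite GS_s /GS sum_eq_rev_signal lexx ler_vE leqNgt sl add0r mulr1 /r.
by rewrite mulrC divfK ?gt_eqF.
Qed.

Lemma cs_eq_rev_signal i :
  cs v (eq_rev_signal v s l) (v i) * eq_rev_signal v s l i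
  = if i == l then (v l - v s) * r else 0.
Proof.
rewrite /cs price_eq_rev_signal eq_rev_signalE.
case: (eqVneq i l) => [->|il].
  have -> : (l == s) = false by apply/negbTE; rewrite neq_ltn sl orbT.
  by rewrite ler_vE (ltnW sl) add0r.
by case: eqP => [->|_]; rewrite /= ?lexx ?subrr ?mul0r ?addr0 ?mulr0.
Qed.

End EqualRevenue.

Lemma cs_singleton_signal a i : cs v (singleton_signal R a) (v i) * singleton_signal R a i = 0.
Proof.
have Sa j : singleton_signal R a j = if j == a then 1 else 0 by rewrite ffunE.
have price_a : price v (singleton_signal R a) = v a.
  apply: price_first_support => [|k ka]; last by rewrite Sa ifF //; apply/negbTE; rewrite neq_ltn ka.
  rewrite /rev_opt Sa eqxx ltr01; apply/forallP => j; apply/implyP; rewrite Sa.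
  by case: eqP => [->|_]; rewrite ?lexx ?ltxx.
by rewrite Sa /cs price_a; case: eqP => [->|_]; rewrite ?subrr ?lexx ?mul0r ?mulr0.
Qed.

Hypothesis f_pos : forall i, 0 < f i.

Definition link := ('I_n * 'I_n * R)%type.
Implicit Types (e : link) (L : seq link) (g t : {ffun 'I_n -> R}).

Definition link_ratio e := v e.1.1 / v e.1.2.
Definition link_signal e : signal R n * R := (eq_rev_signal v e.1.1 e.1.2, e.2).
Definition valid_link e := (e.1.1 < e.1.2)%N /\ 0 <= e.2.
Definition link_surplus e := e.2 * ((v e.1.2 - v e.1.1) * link_ratio e).

Definition low_used L i := \sum_(e <- L | e.1.1 == i) e.2 * (1 - link_ratio e).
Definition high_used L i := \sum_(e <- L | e.1.2 == i) e.2 * link_ratio e.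
Definition matched_surplus k L := \sum_(e <- L | (e.1.2 < k)%N) link_surplus e.

Definition welfare_covered k L :=
  exists p, prefix_welfare f k <= 4 * matched_surplus k L + prefix_revenue f k p.

Lemma link_surplusE e : link_surplus e = v e.1.1 * (e.2 * (1 - link_ratio e)).
Proof. by rewrite /link_surplus /link_ratio; field; rewrite gt_eqF. Qed.

Lemma link_surplus_ge0 e : valid_link e -> 0 <= link_surplus e.
Proof.
case=> sl e0; rewrite link_surplusE; apply: mulr_ge0; first exact: ltW.
by rewrite mulr_ge0 // subr_ge0 ltW // ratio_lt1.
Qed.

Lemma welfare_covered_rcons k L e :
  valid_link e -> welfare_covered k L -> welfare_covered k (rcons L e).
Proof.
move=> ve [p cov]; exists p; apply: le_trans cov _; rewrite lerD2r ler_pM2l //.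
rewrite /matched_surplus big_rcons /=; case: ifP => _; last by rewrite addr0.
by rewrite lerDl link_surplus_ge0.
Qed.

Lemma sum_low_used L : \sum_i v i * low_used L i = \sum_(e <- L) link_surplus e.
Proof.
rewrite /low_used; under eq_bigr do rewrite mulr_sumr big_mkcond.
rewrite exchange_big; apply: eq_bigr => e _ /=.
rewrite (bigD1 e.1.1) //= eqxx big1 ?addr0 ?link_surplusE // => i /negbTE.
by rewrite eq_sym => ->.
Qed.

(* [g] and [t] are the unmatched low and high halves of the masses and [L] the
   links created so far; once a link reaches [k], the prefix below [v k] is
   covered for good. *)
Record sm_inv g t L : Prop := SmInv {
  inv_g_ge0 : forall i, 0 <= g i;
  inv_t_ge0 : forall i, 0 <= t i;
  inv_gE : forall i, g i = f i / 2 - low_used L i;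
  inv_tE : forall i, t i = f i / 2 - high_used L i;
  inv_valid : forall e, e \in L -> valid_link e;
  inv_low_spent : forall e, e \in L -> forall i : 'I_n, (i < e.1.1)%N -> g i = 0;
  inv_covered : forall k, welfare_covered k L \/ forall e, e \in L -> (e.1.2 < k)%N }.

Definition high_done k g t := forall s, first_idx (fun i => 0 < g i) = Some s ->
  forall l : 'I_n, (s < l)%N -> (l < k)%N -> t l = 0.

Section Covered.
Variables (g t : {ffun 'I_n -> R}) (L : seq link).
Hypothesis inv : sm_inv g t L.
Let total := \sum_(e <- L) link_surplus e.

Lemma low_used_ge0 i : 0 <= low_used L i.
Proof.
rewrite /low_used big_seq_cond; apply: sumr_ge0 => e /andP[/(inv_valid inv)[sl e0] _].
by rewrite mulr_ge0 // subr_ge0 ltW // ratio_lt1.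
Qed.

Lemma low_welfare_le k (s : nat) : (forall i : 'I_n, (i < s)%N -> g i = 0) ->
  \sum_(i : 'I_n | (i < k)%N && (i < s)%N) f i * v i <= 2 * total.
Proof.
move=> g0; rewrite /total -sum_low_used mulr_sumr.
apply: (@le_trans _ _ (\sum_(i : 'I_n | (i < k)%N && (i < s)%N) 2 * (v i * low_used L i))).
  apply: ler_sum => i /andP[_ /g0 gi]; have := inv_gE inv i; rewrite gi => gE.
  have -> : f i = 2 * low_used L i by lra.
  by rewrite [v i * _]mulrC mulrA lexx.
rewrite [leRHS](bigID (fun i : 'I_n => (i < k)%N && (i < s)%N)) /= lerDl.
apply: sumr_ge0 => i _; apply: mulr_ge0 => //.
by apply: mulr_ge0; [exact: ltW | exact: low_used_ge0].
Qed.

Lemma high_welfare_le k s : first_idx (fun i => 0 < g i) = Some s -> high_done k g t ->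
  \sum_(i : 'I_n | (i < k)%N && (s < i)%N) f i * (v i - v s) <= 2 * total.
Proof.
move=> first_s hd; have [gs _] := first_idxP first_s.
have fE i : (i < k)%N -> (s < i)%N -> f i = 2 * high_used L i.
  by move=> ik si; have := inv_tE inv i; rewrite (hd s first_s i si ik); lra.
rewrite (eq_bigr (fun i => 2 * ((v i - v s) * high_used L i))); last first.
  by move=> i /andP[ik si]; rewrite fE // mulrAC -mulrA.
rewrite -mulr_sumr ler_pM2l ?ltr0n // /total /high_used.
under eq_bigr do rewrite mulr_sumr big_mkcond.
rewrite exchange_big big_seq [leRHS]big_seq; apply: ler_sum => e eL /=.
have [sl e0] := inv_valid inv eL; have r0 := ratio_gt0 e.1.1 e.1.2.
under eq_bigr do rewrite (eq_sym e.1.2).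
rewrite sum_if_eq; case: ifP => _; last exact: link_surplus_ge0.
have low_le : v e.1.1 <= v s.
  rewrite ler_vE leqNgt; apply/negP => /(inv_low_spent inv eL) gs0.
  by move: gs; rewrite gs0 ltxx.
rewrite /link_surplus [in leRHS]mulrCA ler_wpM2r ?lerD2l ?lerN2 //.
by rewrite mulr_ge0 // ltW.
Qed.

Lemma welfare_covered_of_inv k : high_done k g t ->
  (forall e, e \in L -> (e.1.2 < k)%N) -> welfare_covered k L.
Proof.
move=> hd below; rewrite /welfare_covered.
have -> : matched_surplus k L = total.
  rewrite /matched_surplus /total big_seq_cond [RHS]big_seq; apply: eq_bigl => e.
  by case: (boolP (e \in L)) => //= /below ->.
have total0 : 0 <= total.
  by rewrite /total big_seq sumr_ge0 // => e /(inv_valid inv) /link_surplus_ge0.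
case E: (first_idx (fun i => 0 < g i)) => [s|].
  exists (v s); rewrite (prefix_welfare_split f k s).
  have [_ below_s] := first_idxP E.
  have g0 i : (i < s)%N -> g i = 0.
    by move/below_s => gi; apply/eqP; rewrite eq_le (inv_g_ge0 inv) andbT leNgt.
  have := low_welfare_le k g0; have := high_welfare_le E hd; lra.
exists 0; rewrite /prefix_revenue mul0r addr0.
have g0 i : g i = 0.
  by apply/eqP; rewrite eq_le (inv_g_ge0 inv) andbT leNgt (first_idxPn E).
have -> : prefix_welfare f k = \sum_(i : 'I_n | (i < k)%N && (i < n)%N) f i * v i.
  by apply: eq_bigl => i; rewrite ltn_ord andbT.
have := @low_welfare_le k n (fun i _ => g0 i); lra.
Qed.

End Covered.

Lemma low_used_rcons L e i : low_used (rcons L e) i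
  = low_used L i + (if e.1.1 == i then e.2 * (1 - link_ratio e) else 0).
Proof. by rewrite /low_used big_rcons /=; case: ifP; rewrite ?addr0. Qed.

Lemma high_used_rcons L e i : high_used (rcons L e) i
  = high_used L i + (if e.1.2 == i then e.2 * link_ratio e else 0).
Proof. by rewrite /high_used big_rcons /=; case: ifP; rewrite ?addr0. Qed.

Definition sm_gamma g t s l := Num.min (g s / (1 - v s / v l)) (t l / (v s / v l)).

Definition sm_next_g g t s l : {ffun 'I_n -> R} :=
  [ffun i => if i == s then g s - sm_gamma g t s l * (1 - v s / v l) else g i].

Definition sm_next_t g t s l : {ffun 'I_n -> R} :=
  [ffun i => if i == l then t l - sm_gamma g t s l * (v s / v l) else t i].

Lemma sm_loopS fuel g t acc : sm_loop v fuel.+1 g t acc =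
  match first_idx (fun s => 0 < g s) with
  | None => acc
  | Some s =>
    match first_idx (fun l => (s < l)%N && (0 < t l)) with
    | None => acc
    | Some l => sm_loop v fuel (sm_next_g g t s l) (sm_next_t g t s l)
                  (rcons acc (eq_rev_signal v s l, sm_gamma g t s l))
    end
  end.
Proof. by []. Qed.

Definition sm_measure g t := (#|[pred i | (0 < g i)%R]| + #|[pred i | (0 < t i)%R]|)%N.

Lemma card_pos_le (a b : 'I_n -> R) : (forall i, a i <= b i) ->
  (#|[pred i | (0 < a i)%R]| <= #|[pred i | (0 < b i)%R]|)%N.
Proof.
by move=> ab; apply/subset_leq_card/fintype.subsetP => i /= /lt_le_trans; apply.
Qed.

Lemma card_pos_lt (a b : 'I_n -> R) x : (forall i, a i <= b i) -> a x <= 0 -> 0 < b x ->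
  (#|[pred i | (0 < a i)%R]| < #|[pred i | (0 < b i)%R]|)%N.
Proof.
move=> ab ax bx; apply/proper_card/fintype.properP; split.
  by apply/fintype.subsetP => i /= /lt_le_trans; apply.
by exists x; rewrite //= -leNgt.
Qed.

Section Step.
Variables (g t : {ffun 'I_n -> R}) (s l : 'I_n).
Hypotheses (gs : 0 < g s) (tl : 0 < t l) (sl : (s < l)%N).

Lemma sm_gamma_spec (gam := sm_gamma g t s l) (r := v s / v l) :
  [/\ 0 < gam, gam * (1 - r) <= g s, gam * r <= t l & gam * (1 - r) = g s \/ gam * r = t l].
Proof.
have r0 : 0 < r := ratio_gt0 s l; have r1 : 0 < 1 - r by rewrite subr_gt0 ratio_lt1.
rewrite /gam /sm_gamma -/r; split.
- by rewrite lt_min !divr_gt0.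
- by rewrite -ler_pdivlMr // ge_min lexx.
- by rewrite -ler_pdivlMr // ge_min lexx orbT.
by case: (leP (g s / (1 - r)) (t l / r)) => _; [left | right]; rewrite divfK ?gt_eqF.
Qed.

Lemma sm_measure_step :
  (sm_measure (sm_next_g g t s l) (sm_next_t g t s l) < sm_measure g t)%N.
Proof.
have [gam0 gam_low gam_high gam_ex] := sm_gamma_spec.
have r0 := ratio_gt0 s l; have r1 : 0 < 1 - v s / v l by rewrite subr_gt0 ratio_lt1.
have g'_le i : sm_next_g g t s l i <= g i.
  by rewrite ffunE; case: eqP => [->|_] //; rewrite gerDl oppr_le0 mulr_ge0 ?ltW.
have t'_le i : sm_next_t g t s l i <= t i.
  by rewrite ffunE; case: eqP => [->|_] //; rewrite gerDl oppr_le0 mulr_ge0 ?ltW.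
rewrite /sm_measure; case: gam_ex => [g_ex | t_ex].
  rewrite -addSn leq_add ?card_pos_le // (card_pos_lt g'_le _ gs) //.
  by rewrite ffunE eqxx g_ex subrr.
rewrite -addnS leq_add ?card_pos_le // (card_pos_lt t'_le _ tl) //.
by rewrite ffunE eqxx t_ex subrr.
Qed.

End Step.

Lemma sm_inv_step g t L s l : sm_inv g t L ->
  first_idx (fun i => 0 < g i) = Some s ->
  first_idx (fun i => (s < i)%N && (0 < t i)) = Some l ->
  sm_inv (sm_next_g g t s l) (sm_next_t g t s l) (rcons L (s, l, sm_gamma g t s l)).
Proof.
move=> Hinv Es El; have [gs s_first] := first_idxP Es; have [/andP[sl tl] l_first] := first_idxP El.
have [gam0 gam_low gam_high _] := sm_gamma_spec gs tl sl.
rewrite /sm_next_g /sm_next_t; set gam := sm_gamma g t s l in gam0 gam_low gam_high *.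
have ve : valid_link (s, l, gam) by split => //; exact: ltW.
have memL e : e \in rcons L (s, l, gam) -> e = (s, l, gam) \/ e \in L.
  by rewrite mem_rcons in_cons => /orP[/eqP|]; [left|right].
have g_below i : (i < s)%N -> g i = 0.
  by move/s_first => gi; apply/eqP; rewrite eq_le (inv_g_ge0 Hinv) andbT leNgt.
split.
- move=> i; rewrite ffunE; case: eqP => _; [lra | exact: inv_g_ge0 Hinv i].
- move=> i; rewrite ffunE; case: eqP => _; [lra | exact: inv_t_ge0 Hinv i].
- move=> i; rewrite ffunE low_used_rcons /link_ratio /=.
  by case: (eqVneq i s) => [->|_]; rewrite (inv_gE Hinv); lra.
- move=> i; rewrite ffunE high_used_rcons /link_ratio /=.
  by case: (eqVneq i l) => [->|_]; rewrite (inv_tE Hinv); lra.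
- by move=> e /memL[-> | /(inv_valid Hinv)].
- move=> e /memL[-> i /= i_lt | eL i i_lt]; rewrite ffunE.
    by rewrite ifF ?g_below //; apply/negbTE; rewrite neq_ltn i_lt.
  case: eqP => [i_eq | _]; last exact: inv_low_spent Hinv e eL i i_lt.
  by move: gs; rewrite -i_eq (inv_low_spent Hinv eL i_lt) ltxx.
move=> k; case: (inv_covered Hinv k) => [cov | below]; first by left; exact: welfare_covered_rcons.
case: (ltnP l k) => [lk | kl]; first by right => e /memL[-> | /below].
left; apply: (welfare_covered_rcons ve).
suff hd : high_done k g t by exact: (welfare_covered_of_inv Hinv hd below).
move=> s'; rewrite Es => -[<-] l' sl' l'k; have := l_first l' (leq_trans l'k kl).
by rewrite sl' /= => tl'; apply/eqP; rewrite eq_le (inv_t_ge0 Hinv) andbT leNgt.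
Qed.

Lemma sm_loop_links fuel g t L : sm_inv g t L -> (sm_measure g t < fuel)%N ->
  exists L', [/\ sm_loop v fuel g t (map link_signal L) = map link_signal L',
    forall k, welfare_covered k L' & forall e, e \in L' -> valid_link e].
Proof.
elim: fuel g t L => // fuel IH g t L Hinv; rewrite ltnS => mu_le; rewrite sm_loopS.
have stop : (forall k, high_done k g t) -> exists L', [/\ map link_signal L = map link_signal L',
    forall k, welfare_covered k L' & forall e, e \in L' -> valid_link e].
  move=> hd; exists L; split=> // [k|]; last exact: inv_valid Hinv.
  by case: (inv_covered Hinv k) => // /(welfare_covered_of_inv Hinv (hd k)).
case Es: first_idx => [s|]; last by apply: stop => k s'; rewrite Es.
case El: first_idx => [l|]; last first.
  apply: stop => k s'; rewrite Es => -[<-] l' sl' _; have := first_idxPn El l'.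
  by rewrite sl' /= => tl'; apply/eqP; rewrite eq_le (inv_t_ge0 Hinv) andbT leNgt.
have [gs _] := first_idxP Es; have [/andP[sl tl] _] := first_idxP El.
rewrite -[(eq_rev_signal v s l, _)]/(link_signal (s, l, sm_gamma g t s l)) -map_rcons.
by apply: IH (sm_inv_step Hinv Es El) _; apply: leq_trans (sm_measure_step gs tl sl) mu_le.
Qed.

Lemma sm_binary_links : exists L, [/\ sm_binary v f = map link_signal L,
  forall k, welfare_covered k L & forall e, e \in L -> valid_link e].
Proof.
have half0 i : 0 <= f i / 2 by rewrite divr_ge0 ?ltW.
have Hinv : sm_inv [ffun i => f i / 2] [ffun i => f i / 2] [::].
  split=> [i|i|i|i|e|e|k]; rewrite ?ffunE ?in_nil //.
  - by rewrite /low_used big_nil subr0.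
  - by rewrite /high_used big_nil subr0.
  - by right => e; rewrite in_nil.
apply: (sm_loop_links Hinv); rewrite ltnS /sm_measure mul2n -addnn.
by apply: leq_add; rewrite -[X in (_ <= X)%N]card_ord max_card.
Qed.

Lemma surplus_at_split_and_match L i : sm_binary v f = map link_signal L ->
  (forall e, e \in L -> valid_link e) ->
  surplus_at (split_and_match v f) i = \sum_(e <- L) (if i == e.1.2 then link_surplus e else 0).
Proof.
move=> E valid; rewrite /surplus_at /split_and_match E big_cat !big_map /=.
rewrite [X in _ + X]big1 ?addr0 => [|a _]; last by rewrite mulrAC cs_singleton_signal mul0r.
rewrite big_seq [RHS]big_seq; apply: eq_bigr => e /valid[sl _].
by rewrite mulrAC cs_eq_rev_signal //; case: eqP; rewrite ?mul0r // mulrC.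
Qed.

Lemma prefix_surplus_split_and_match L k : sm_binary v f = map link_signal L ->
  (forall e, e \in L -> valid_link e) ->
  \sum_(i : 'I_n | (i < k)%N) surplus_at (split_and_match v f) i = matched_surplus k L.
Proof.
move=> E valid; under eq_bigr do rewrite (surplus_at_split_and_match _ E valid).
by rewrite exchange_big /matched_surplus [RHS]big_mkcond; apply: eq_bigr => e _; rewrite sum_if_eq.
Qed.

Lemma prefix_surplus_le_split_and_match Z k : is_scheme f Z ->
  \sum_(i : 'I_n | (i < k)%N) surplus_at Z i
  <= 4 * \sum_(i : 'I_n | (i < k)%N) surplus_at (split_and_match v f) i.
Proof.
move=> HZ; have [L [E cov valid]] := sm_binary_links.
rewrite (prefix_surplus_split_and_match k E valid); have [p cov_p] := cov k.
by have := scheme_prefix_bound k p HZ; lra.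
Qed.

Lemma cs_ge0 S x : 0 <= cs v S x.
Proof. by rewrite /cs; case: ifP => //; rewrite subr_ge0. Qed.

Lemma surplus_at_ge0 Z : is_scheme f Z -> forall i, 0 <= surplus_at Z i.
Proof.
case=> HZ _ i; rewrite /surplus_at big_seq sumr_ge0 // => q /HZ[[S0 _] q0].
by rewrite !mulr_ge0 ?cs_ge0.
Qed.

Lemma surplus_at_split_and_match_ge0 i : 0 <= surplus_at (split_and_match v f) i.
Proof.
have [L [E _ valid]] := sm_binary_links.
rewrite (surplus_at_split_and_match _ E valid) big_seq sumr_ge0 // => e /valid ve.
by case: ifP => // _; exact: link_surplus_ge0.
Qed.

Lemma Fprev_ge0 i : 0 <= Fprev f i.
Proof. by rewrite sumr_ge0 // => j _; exact: ltW. Qed.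

Lemma Fcur_Fprev i : Fcur f i = Fprev f i + f i.
Proof.
rewrite /Fcur (bigD1 i) //= addrC; congr (_ + _); apply: eq_bigl => j.
by rewrite -val_eqE /=; case: ltngtP.
Qed.

Lemma Fcur_le_Fprev i j : (i < j)%N -> Fcur f i <= Fprev f j.
Proof.
move=> ij; rewrite /Fprev [leRHS](bigID (fun k : 'I_n => (k <= i)%N)) /=.
rewrite (eq_bigl (fun k : 'I_n => (k <= i)%N)) ?lerDl ?sumr_ge0 // => [k _|k].
  exact: ltW.
by case: (leqP k i) => ki; rewrite ?andbF // andbT (leq_ltn_trans ki ij).
Qed.

Definition mass_weight (m : R) i := itv_overlap (Fprev f i) (Fcur f i) m / f i.

Lemma itv_overlap_mass m i : 0 <= itv_overlap (Fprev f i) (Fcur f i) m <= f i.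
Proof.
rewrite /itv_overlap; case: ifP => [lt_min | _]; last by rewrite lexx (ltW (f_pos i)).
have : Num.min (Fcur f i) m <= Fcur f i by rewrite ge_min lexx.
by move: lt_min; rewrite Fcur_Fprev => lt_min min_le; apply/andP; split; lra.
Qed.

Lemma mass_weight_ge0 m i : 0 <= mass_weight m i.
Proof. by have /andP[ov0 _] := itv_overlap_mass m i; rewrite divr_ge0 // ltW. Qed.

(* The weight is 1 before the value whose mass straddles [m] and 0 after it. *)
Lemma mass_weight_noninc m (i j : 'I_n) : (i <= j)%N -> mass_weight m j <= mass_weight m i.
Proof.
rewrite leq_eqVlt => /orP[/eqP/val_inj -> // | ij].
have /andP[_ ovjf] := itv_overlap_mass m j; have /andP[_ ovif] := itv_overlap_mass m i.
have [ovi_lt | ovi_ge] := ltrP (itv_overlap (Fprev f i) (Fcur f i) m) (f i).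
  have m_lt : m < Fcur f i.
    rewrite ltNge; apply/negP => Fcur_le; move: ovi_lt.
    by rewrite /itv_overlap (min_l Fcur_le) Fcur_Fprev ifT ?ltrDl //; lra.
  suff -> : mass_weight m j = 0 by exact: mass_weight_ge0.
  rewrite /mass_weight /itv_overlap ifF ?mul0r //; apply/negbTE.
  by rewrite -leNgt ge_min (le_trans (ltW m_lt) (Fcur_le_Fprev ij)) orbT.
have ovi_eq : itv_overlap (Fprev f i) (Fcur f i) m = f i by apply/eqP; rewrite eq_le ovif.
by rewrite {2}/mass_weight ovi_eq divff ?gt_eqF // /mass_weight ler_pdivrMr // mul1r.
Qed.

Lemma cs_schemeE Z i : cs_scheme v f Z i = surplus_at Z i / f i.
Proof. by rewrite /cs_scheme /surplus_at mulr_suml. Qed.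

Lemma integral_surplus_mass Z m : (forall i, 0 <= surplus_at Z i) ->
  (\int[lebesgue_measure]_(x in `]0%R, m]) (surplus_mass v f Z x)%:E
   = (\sum_i mass_weight m i * surplus_at Z i)%:E)%E.
Proof.
move=> Z0; rewrite integral_step_function => [|i|i]; last exact: Fprev_ge0.
  by congr EFin; apply: eq_bigr => i _; rewrite cs_schemeE /mass_weight; ring.
by rewrite cs_schemeE divr_ge0 ?Z0 // ltW.
Qed.

End SplitAndMatch.

Local Open Scope classical_set_scope.

Theorem lemma1 (R : realType) (n : nat) (v : 'I_n -> R) (f : 'I_n -> R)
  (v_pos : forall i, 0 < v i)
  (v_incr : forall i j : 'I_n, (i < j)%N -> v i < v j)
  (f_pos : forall i, 0 < f i)
  (f_sum : \sum_i f i = 1)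
  (Z' : scheme R n) (HZ' : is_scheme f Z')
  (m : R) (m_pos : 0 < m) (m_le1 : m <= 1) :
  (\int[lebesgue_measure]_(x in `]0%R, m]) (surplus_mass v f Z' x)%:E
   <= 4%:E * \int[lebesgue_measure]_(x in `]0%R, m]) (surplus_mass v f (split_and_match v f) x)%:E)%E.
Proof.
rewrite (integral_surplus_mass f_pos _ (surplus_at_ge0 v HZ')).
rewrite (integral_surplus_mass f_pos _ (surplus_at_split_and_match_ge0 v_pos v_incr f_pos)).
rewrite -EFinM lee_fin mulr_sumr; under [leRHS]eq_bigr do rewrite mulrCA.
apply: ler_prefix_weighted => [k | i | i j]; last 2 first.
- exact: mass_weight_ge0.
- exact: mass_weight_noninc.
by rewrite -mulr_sumr prefix_surplus_le_split_and_match.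
Qed.
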